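(* Let $p,q\in\mathcal{S}$, $k^*=\arg\max_kq_k$, $k_*=\arg\min_kq_k$, $\delta\in[0,\log(1/p_{k^*}))$, and for each $m$ let $Y^m\sim\phi_\delta^m$. The map $\beta\mapsto H(T(q,p,\beta)\|q)$ is a continuous strictly decreasing bijection from $\mathbb{R}$ onto the open interval $I=(\log(1/q_{k^*}),\log(1/q_{k_*}))$; for $t\in I$ let $\beta(t)$ be the unique $\beta\in\mathbb{R}$ with $H(T(q,p,\beta)\|q)=t$. Then the sequence $\{-\frac1m\log q^m(Y^m)\}_{m\in\mathbb{N}}$ (i.e. the negative per-symbol reward) satisfies a large deviation principle with rate function $$J_\delta(t)=D_{\mathrm{KL}}\big(T(q,p,\beta(t))\,\|\,\phi_\delta\big)\quad (t\in I),$$ $J_\delta(\log(1/q_{k^*}))=\log(1/\phi_\delta(k^* ))$, $J_\delta(\log(1/q_{k_*}))=\log(1/\phi_\delta(k_* ))$, and $J_\delta(t)=+\infty$ for $t\notin\bar I$.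
   Context: Fix $K\ge2$, $\zeta\in(0,1/K)$. $\mathcal{S}$ is the set of probability vectors on $[K]$ with all entries $>\zeta$ and pairwise distinct. $p^m(y^m)=\prod_i p_{y_i}$ denotes the product distribution on $[K]^m$; the reward of $y^m$ is $r(y^m)=\log q^m(y^m)$. $H(a\|b)=\sum a\log(1/b)$, $D_{\mathrm{KL}}(a\|b)=\sum a\log(a/b)$. Mismatched tilt: $T(q,p,\alpha)_k=p_kq_k^\alpha/\sum_jp_jq_j^\alpha$ for $\alpha\in\mathbb{R}$. For $\delta\in[0,\log(1/p_{k^*}))$, $\alpha(\delta)$ is the unique $\alpha\ge0$ with $D_{\mathrm{KL}}(T(q,p,\alpha)\|p)=\delta$, and $\phi_\delta=T(q,p,\alpha(\delta))$. A sequence of real random variables $\{Z_n\}$ satisfies a large deviation principle (LDP) with rate function $J:\mathbb{R}\to[0,\infty]$ if $J$ is lower semicontinuous with compact level sets and for every Borel set $B$: $-\inf_{t\in B^\circ}J(t)\le\liminf_n\frac1n\log\mathbb{P}(Z_n\in B)\le\limsup_n\frac1n\log\mathbb{P}(Z_n\in B)\le-\inf_{t\in\bar B}J(t)$. *)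

From HB Require Import structures.
From mathcomp Require Import all_boot all_order all_algebra.
From mathcomp Require Import all_classical all_reals all_analysis.
Set Implicit Arguments. Unset Strict Implicit. Unset Printing Implicit Defensive.
Import Order.TTheory GRing.Theory Num.Theory.
Import numFieldNormedType.Exports.
Local Open Scope classical_set_scope.
Local Open Scope ring_scope.

Section Defs.
Variable R : realType.
Variable K : nat.

Definition inS (zeta : R) (p : 'I_K -> R) : Prop :=
  [/\ \sum_(k < K) p k = 1,
      (forall k, zeta < p k) &
      (forall j k : 'I_K, j != k -> p j != p k)].

Definition tilt (q p : 'I_K -> R) (a : R) : 'I_K -> R :=
  fun k => p k * q k `^ a / \sum_(j < K) p j * q j `^ a.

Definition crossH (a b : 'I_K -> R) : R := \sum_(k < K) a k * ln (b k)^-1.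

Definition KL (a b : 'I_K -> R) : R := \sum_(k < K) a k * ln (a k / b k).

Definition elog (x : R) : \bar R := if x == 0 then -oo%E else (ln x)%:E.

Definition negreward (q : 'I_K -> R) (m : nat) (y : {ffun 'I_m -> 'I_K}) : R :=
  - (m%:R^-1 * ln (\prod_(i < m) q (y i))).

(* P(Z_m \in B) where Z_m = -(1/m) log q^m(Y^m), Y^m ~ phi^m (product law) *)
Definition probZ (phi q : 'I_K -> R) (m : nat) (B : set R) : R :=
  \sum_(y : {ffun 'I_m -> 'I_K})
     (if negreward q y \in B then \prod_(i < m) phi (y i) else 0).

End Defs.

(* The sequence is indexed by
   m = n.+1 (n : nat) to avoid the meaningless m = 0 term; this does not
   affect liminf/limsup. *)
Definition LDP (R : realType) (mu : nat -> set R -> R) (J : R -> \bar R) : Prop :=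
  [/\ (forall t, (0 <= J t)%E),
      lower_semicontinuous J,
      (forall c : R, compact [set t | (J t <= c%:E)%E]) &
      (forall B : set R, measurable B ->
        (- ereal_inf (J @` interior B)
           <= limn_einf (fun n => (n.+1%:R^-1)%:E * elog (mu n.+1 B)))%E /\
        (limn_esup (fun n => (n.+1%:R^-1)%:E * elog (mu n.+1 B))
           <= - ereal_inf (J @` closure B))%E)].

From HB Require Import structures.
From mathcomp Require Import all_boot all_order all_algebra.
From mathcomp Require Import all_classical all_reals all_analysis.
From mathcomp Require Import ring lra.
Import Order.TTheory GRing.Theory Num.Theory.
Import numFieldNormedType.Exports.
Local Open Scope classical_set_scope.
Local Open Scope ring_scope.

(* The tilts [T b = tilt q p b] form an exponential family in the surprisal
   [c_k = ln (1 / q_k)], with log-partition [L]; the mean surprisal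
   [f b = H(T b || q)] satisfies [D(T b || T th) = (th - b) f b + L th - L b].
   Gibbs' inequality applied to both [D(T b1 || T b2)] and [D(T b2 || T b1)]
   makes [f] strictly decreasing, and since [T b] concentrates on the letter
   of largest (smallest) [q] as [b -> +oo] ([-oo]), [f] sweeps out [(a, b)].

   For a word [y] of length [m] the likelihood ratio of [T th ^ m] against
   [T b ^ m] only depends on the total surprisal [m Z_m(y)].  Hence the
   Chernoff change of measure from [phi = T alpha] to [T beta] bounds the
   tails [Z_m <= s] and [Z_m >= s] by [exp (- m J s)], while the law of large
   numbers under [T beta] with [f beta = t] bounds the mass of small
   neighbourhoods of [t] from below.  At the endpoints only a constant word
   has [Z_m = a] (resp. [b]).  Finally [J t = sup_g ((alpha - g) t + L alpha - L g)]
   is a supremum of affine functions, hence lower semicontinuous. *)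

Set Implicit Arguments. Unset Strict Implicit. Unset Printing Implicit Defensive.

Section Gibbs.
Variable R : realType.

Lemma ln_le_subr1 (x : R) : 0 < x -> ln x <= x - 1.
Proof. by move=> x0; have := expR_ge1Dx (ln x); rewrite lnK ?posrE //; lra. Qed.

Lemma ln_lt_subr1 (x : R) : 0 < x -> x != 1 -> ln x < x - 1.
Proof.
move=> x0 x1; have := @expR_gt1Dx R (ln x).
by rewrite lnK ?posrE // ln_eq0 // x1 => /(_ isT); lra.
Qed.

Lemma subr_le_mul_ln_div (a b : R) : 0 < a -> 0 < b -> a - b <= a * ln (a / b).
Proof.
move=> a0 b0; rewrite -invf_div lnV ?posrE ?divr_gt0 //.
have : a * ln (b / a) <= a * (b / a - 1) by rewrite ler_pM2l // ln_le_subr1 ?divr_gt0.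
by rewrite mulrBr mulrCA divff ?gt_eqF // !mulr1; lra.
Qed.

Lemma subr_lt_mul_ln_div (a b : R) : 0 < a -> 0 < b -> a != b ->
  a - b < a * ln (a / b).
Proof.
move=> a0 b0 ab; rewrite -invf_div lnV ?posrE ?divr_gt0 //.
have ba1 : b / a != 1.
  apply/eqP => /(congr1 ( *%R^~ a)) /=; rewrite mul1r divfK ?gt_eqF // => eq_ba.
  by rewrite eq_ba eqxx in ab.
have : a * ln (b / a) < a * (b / a - 1) by rewrite ltr_pM2l // ln_lt_subr1 ?divr_gt0.
by rewrite mulrBr mulrCA divff ?gt_eqF // !mulr1; lra.
Qed.

Variable K : nat.
Variables P Q : 'I_K -> R.
Hypothesis P_gt0 : forall k, 0 < P k.
Hypothesis Q_gt0 : forall k, 0 < Q k.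
Hypothesis sumPQ : \sum_k P k = \sum_k Q k.

Lemma KL_ge0 : 0 <= KL P Q.
Proof.
apply: le_trans (_ : \sum_k (P k - Q k) <= _); first by rewrite sumrB sumPQ subrr.
by apply: ler_sum => k _; apply: subr_le_mul_ln_div.
Qed.

Lemma KL_gt0 : (exists k, P k != Q k) -> 0 < KL P Q.
Proof.
move=> [k0 PQk0]; apply: le_lt_trans (_ : \sum_k (P k - Q k) < _).
  by rewrite sumrB sumPQ subrr.
rewrite (bigD1 k0) //= [X in _ < X](bigD1 k0) //=.
apply: ltr_leD; first exact: subr_lt_mul_ln_div.
by apply: ler_sum => k _; apply: subr_le_mul_ln_div.
Qed.

End Gibbs.

Lemma continuous_sumr (R : realType) (I : Type) (r : seq I) (F : I -> R -> R) :
  (forall i, continuous (F i)) -> continuous (fun x => \sum_(i <- r) F i x).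
Proof.
move=> F_cont; elim: r => [|i r IH].
  by under eq_fun do rewrite big_nil; exact: cst_continuous.
under eq_fun do rewrite big_cons.
by move=> x; apply: continuousD; [exact: F_cont | exact: IH].
Qed.

Section MaskedSums.
Variables (R : realType) (T : finType) (w : T -> R).
Hypothesis w_ge0 : forall y, 0 <= w y.

Lemma masked_sum_le (P Q : pred T) : (forall y, P y -> Q y) ->
  \sum_y (if P y then w y else 0) <= \sum_y (if Q y then w y else 0).
Proof.
move=> PQ; apply: ler_sum => y _; case: ifP => [/PQ -> //|_].
by case: ifP.
Qed.

Lemma masked_sum_le_split (P Q1 Q2 : pred T) : (forall y, P y -> Q1 y || Q2 y) ->
  \sum_y (if P y then w y else 0) <=
  \sum_y (if Q1 y then w y else 0) + \sum_y (if Q2 y then w y else 0).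
Proof.
move=> PQ; rewrite -big_split /=; apply: ler_sum => y _.
case: ifP => Py; last by rewrite addr_ge0 //; case: ifP.
move: (PQ y Py); case: (Q1 y); case: (Q2 y) => //= _.
- by rewrite lerDl.
- by rewrite addr0.
- by rewrite add0r.
Qed.

Lemma masked_sum_ge_term (P : pred T) y0 : P y0 ->
  w y0 <= \sum_y (if P y then w y else 0).
Proof.
move=> Py0; rewrite (bigD1 y0) //= Py0 lerDl.
by apply: sumr_ge0 => y _; case: ifP.
Qed.

Lemma masked_sum_le_single (P : pred T) y0 : (forall y, P y -> y = y0) ->
  \sum_y (if P y then w y else 0) <= w y0.
Proof.
move=> Py0; rewrite (bigD1 y0) //= big1 ?addr0; first by case: ifP.
by move=> y yy0; case: ifP => // /Py0 eq_y; rewrite eq_y eqxx in yy0.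
Qed.

Lemma masked_sum_le_total (P : pred T) :
  \sum_y (if P y then w y else 0) <= \sum_y w y.
Proof. by apply: ler_sum => y _; case: ifP. Qed.

End MaskedSums.

Section RateSequences.
Variable R : realType.
Local Open Scope ereal_scope.

(* The sequence in [LDP]: index [n] stands for words of length [n.+1], and
   [elog 0 = -oo]. *)
Definition rate_seq (P : nat -> R) : nat -> \bar R :=
  fun n => (n.+1%:R^-1)%:E * elog (P n).

Lemma elog_gt0 (x : R) : (0 < x)%R -> elog x = (ln x)%:E.
Proof. by move=> x0; rewrite /elog gt_eqF. Qed.

Lemma limn_esup_le_esups (u : nat -> \bar R) N : limn_esup u <= esups u N.
Proof.
rewrite limn_esup_lim (cvg_lim _ (@cvg_esups_inf R u)) //.
by apply: ereal_inf_lbound; exists N.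
Qed.

Lemma limn_esup_le_eventually (u : nat -> \bar R) (x : R) :
  (forall e, (0 < e)%R -> exists N, forall n, (N <= n)%N -> u n <= (x + e)%:E) ->
  limn_esup u <= x%:E.
Proof.
move=> ev_le; apply/lee_addgt0Pr => e e0; have [N uN] := ev_le e e0.
apply: le_trans (limn_esup_le_esups u N) _.
by apply: ge_ereal_sup => _ [n /= Nn <-]; rewrite -EFinD; apply: uN.
Qed.

Lemma limn_einf_ge_eventually (u : nat -> \bar R) (x : R) :
  (forall e, (0 < e)%R -> exists N, forall n, (N <= n)%N -> (x - e)%:E <= u n) ->
  x%:E <= limn_einf u.
Proof.
move=> ev_ge; rewrite /limn_einf leeNr -EFinN.
apply: limn_esup_le_eventually => e e0; have [N uN] := ev_ge e e0.
by exists N => n Nn; rewrite leeNl -EFinN opprD opprK; apply: uN.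
Qed.

Lemma norm_div_succ_le (A e : R) : (0 < e)%R ->
  exists N, forall n, (N <= n)%N -> (`|A| / n.+1%:R <= e)%R.
Proof.
move=> e0; exists (Num.bound (`|A| / e)) => n Nn.
have bound_gt : (`|A| / e < (Num.bound (`|A| / e))%:R)%R.
  by apply: archi_boundP; rewrite divr_ge0 // ltW.
have bound_le : ((Num.bound (`|A| / e))%:R <= n.+1%:R :> R)%R.
  by rewrite ler_nat (leq_trans Nn).
move: bound_gt; rewrite ler_pdivrMr ?ltr0n // ltr_pdivrMr // => bound_gt.
have : (0 <= e)%R by apply: ltW.
nra.
Qed.

Lemma expR_mulN_le (d e : R) : (0 < d)%R -> (0 < e)%R ->
  exists N, forall n, (N <= n)%N -> (expR (- (n.+1%:R * d)) <= e)%R.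
Proof.
move=> d0 e0; have [N hN] := norm_div_succ_le (ln e) d0; exists N => n Nn.
have := hN n Nn; rewrite ler_pdivrMr ?ltr0n // => ln_le.
rewrite -[X in (_ <= X)%R](lnK (_ : e \in Num.pos)) ?posrE // ler_expR.
have := ler_norm (- ln e); rewrite normrN; nra.
Qed.

Lemma limn_esup_rate_le (P : nat -> R) (C c : R) : (0 < C)%R ->
  (forall n, 0 <= P n <= C * expR (- (n.+1%:R * c)))%R ->
  limn_esup (rate_seq P) <= (- c)%:E.
Proof.
move=> C0 P_bnd; apply: limn_esup_le_eventually => e e0.
have [N hN] := norm_div_succ_le (ln C) e0; exists N => n Nn.
have /andP[P0 P_le] := P_bnd n; rewrite /rate_seq.
have [->|Pn0] := eqVneq (P n) 0%R.
  by rewrite /elog eqxx gt0_muleNy ?leNye // lte_fin invr_gt0 ltr0n.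
have Pn_gt0 : (0 < P n)%R by rewrite lt_neqAle eq_sym Pn0.
rewrite elog_gt0 // -EFinM lee_fin.
have : (ln (P n) <= ln C - n.+1%:R * c)%R.
  have := P_le; rewrite -ler_ln ?posrE ?mulr_gt0 ?expR_gt0 //.
  by rewrite lnM ?posrE ?expR_gt0 // expRK.
move=> ln_le; have := hN n Nn; rewrite ler_pdivrMr ?ltr0n // => normC_le.
have := ler_norm (ln C); rewrite mulrC ler_pdivrMr ?ltr0n //; nra.
Qed.

Lemma limn_einf_rate_ge (P : nat -> R) (C c : R) N0 : (0 < C)%R ->
  (forall n, (N0 <= n)%N -> C * expR (- (n.+1%:R * c)) <= P n)%R ->
  (- c)%:E <= limn_einf (rate_seq P).
Proof.
move=> C0 P_bnd; apply: limn_einf_ge_eventually => e e0.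
have [N hN] := norm_div_succ_le (ln C) e0; exists (maxn N N0) => n.
rewrite geq_max => /andP[Nn N0n]; have P_ge := P_bnd n N0n.
have Pn_gt0 : (0 < P n)%R by apply: lt_le_trans P_ge; rewrite mulr_gt0 ?expR_gt0.
rewrite /rate_seq elog_gt0 // -EFinM lee_fin.
have : (ln C - n.+1%:R * c <= ln (P n))%R.
  have := P_ge; rewrite -ler_ln ?posrE ?mulr_gt0 ?expR_gt0 //.
  by rewrite lnM ?posrE ?expR_gt0 // expRK.
move=> ln_ge; have := hN n Nn; rewrite ler_pdivrMr ?ltr0n // => normC_le.
have := ler_norm (- ln C); rewrite normrN mulrC ler_pdivlMr ?ltr0n //; nra.
Qed.

End RateSequences.

Lemma ln_prod (R : realType) (I : Type) (s : seq I) (F : I -> R) :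
  (forall i, 0 < F i) -> ln (\prod_(i <- s) F i) = \sum_(i <- s) ln (F i).
Proof.
move=> F_gt0; elim: s => [|i s IH]; first by rewrite !big_nil ln1.
by rewrite !big_cons lnM ?posrE ?IH // prodr_gt0.
Qed.

Lemma sumr_const_ord (R : pzSemiRingType) m (x : R) : \sum_(i < m) x = m%:R * x.
Proof. by rewrite sumr_const card_ord mulr_natl. Qed.

Lemma closed_sup_mem (R : realType) (A : set R) :
  closed A -> A !=set0 -> has_ubound A -> A (sup A).
Proof.
by move=> A_closed A0 A_ub; have := closure_sup A0 A_ub; rewrite -(closure_id A).1.
Qed.

Section TiltedFamily.
Variables (R : realType) (K : nat) (p q : 'I_K -> R).
Hypothesis p_gt0 : forall k, 0 < p k.
Hypothesis q_gt0 : forall k, 0 < q k.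
Hypothesis K_gt0 : (0 < K)%N.

Definition surprisal (k : 'I_K) : R := ln (q k)^-1.
Definition partition (g : R) : R := \sum_(k < K) p k * expR (g * ln (q k)).
Definition log_partition (g : R) : R := ln (partition g).
Definition tilt_mean (g : R) : R := crossH (tilt q p g) q.

(* [m * llr th b (S / m)] is the log-likelihood ratio [ln (T_b^m y / T_th^m y)]
   of any word [y] of total surprisal [S], see [tilt_prod_change]. *)
Definition llr (th b t : R) : R := (th - b) * t + log_partition th - log_partition b.

Lemma surprisalE k : surprisal k = - ln (q k).
Proof. by rewrite /surprisal lnV // posrE. Qed.

Lemma tilt_meanE g : tilt_mean g = \sum_k tilt q p g k * surprisal k.
Proof. by []. Qed.

Lemma tiltE g k : tilt q p g k = p k * expR (g * ln (q k)) / partition g.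
Proof.
have powRE j : q j `^ g = expR (g * ln (q j)) by rewrite /powR gt_eqF.
by rewrite /tilt powRE; congr (_ / _); apply: eq_bigr => j _; rewrite powRE.
Qed.

Lemma partition_gt0 g : 0 < partition g.
Proof.
rewrite /partition (bigD1 (Ordinal K_gt0)) //= ltr_wpDr ?mulr_gt0 ?expR_gt0 //.
by apply: sumr_ge0 => k _; rewrite mulr_ge0 ?expR_ge0 ?ltW.
Qed.

Lemma tilt_gt0 g k : 0 < tilt q p g k.
Proof. by rewrite tiltE divr_gt0 ?partition_gt0 ?mulr_gt0 ?expR_gt0. Qed.

Lemma sum_tilt g : \sum_k tilt q p g k = 1.
Proof.
under eq_bigr => k _ do rewrite tiltE.
by rewrite -mulr_suml divff // gt_eqF // partition_gt0.
Qed.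

Lemma tilt_le1 g k : tilt q p g k <= 1.
Proof.
rewrite -(sum_tilt g) (bigD1 k) //= lerDl.
by apply: sumr_ge0 => j _; rewrite ltW // tilt_gt0.
Qed.

Lemma tilt_complement g k : 1 - tilt q p g k = \sum_(j < K | j != k) tilt q p g j.
Proof. by rewrite -(sum_tilt g) (bigD1 k) //= addrC addrK. Qed.

Lemma ln_tilt g k : ln (tilt q p g k) = ln (p k) - g * surprisal k - log_partition g.
Proof.
rewrite tiltE ln_div ?posrE ?partition_gt0 ?mulr_gt0 ?expR_gt0 //.
by rewrite lnM ?posrE ?expR_gt0 // expRK surprisalE mulrN opprK.
Qed.

Lemma ln_tilt_ratio th b k :
  ln (tilt q p b k / tilt q p th k) = llr th b (surprisal k).
Proof. by rewrite ln_div ?posrE ?tilt_gt0 // !ln_tilt /llr; ring. Qed.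

Lemma llr_id th t : llr th th t = 0.
Proof. by rewrite /llr; ring. Qed.

Lemma llr_sub th b g t : llr th b t - llr th g t = llr g b t.
Proof. by rewrite /llr; ring. Qed.

Lemma llr_surprisal_le th g k : llr th g (surprisal k) <= ln (tilt q p th k)^-1.
Proof.
rewrite -ln_tilt_ratio ln_div ?posrE ?tilt_gt0 // lnV ?posrE ?tilt_gt0 //.
by have := ln_le0 (tilt_le1 g k); lra.
Qed.

Lemma KL_tilt th b : KL (tilt q p b) (tilt q p th) = llr th b (tilt_mean b).
Proof.
rewrite /KL tilt_meanE /llr.
transitivity (\sum_k ((th - b) * (tilt q p b k * surprisal k) +
    tilt q p b k * (log_partition th - log_partition b))).
  by apply: eq_bigr => k _; rewrite ln_tilt_ratio /llr; ring.
by rewrite big_split /= -mulr_sumr -mulr_suml sum_tilt; ring.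
Qed.

Lemma expR_scaled_continuous (a : R) : continuous (fun g : R => expR (g * a)).
Proof.
move=> x; apply: (@continuous_comp _ _ _ (fun g : R => g * a) expR).
  by apply: continuousM; [exact: cvg_id | exact: cst_continuous].
exact: continuous_expR.
Qed.

Lemma tilt_weight_continuous k : continuous (fun g : R => p k * expR (g * ln (q k))).
Proof.
move=> x; have cst : {for x, continuous (fun=> p k)} by exact: cst_continuous.
have expR_cont : {for x, continuous (fun g : R => expR (g * ln (q k)))}.
  exact: expR_scaled_continuous.
exact: (continuousM cst expR_cont).
Qed.

Lemma tilt_mean_continuous : continuous tilt_mean.
Proof.
have partition_cont : continuous partition.
  by apply: continuous_sumr; exact: tilt_weight_continuous.
rewrite /tilt_mean /crossH; under eq_fun do under eq_bigr do rewrite tiltE.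
apply: continuous_sumr => k x.
have inv_cont : {for x, continuous (fun g : R => (partition g)^-1)}.
  by apply: continuousV; [rewrite gt_eqF // partition_gt0 | exact: partition_cont].
have cst : {for x, continuous (fun=> surprisal k)} by exact: cst_continuous.
have weight_cont : {for x, continuous (fun g : R => p k * expR (g * ln (q k)))}.
  exact: tilt_weight_continuous.
exact: (continuousM (continuousM weight_cont inv_cont) cst).
Qed.

Lemma tilt_le_ratio g k kk :
  tilt q p g k <= p k / p kk * expR (g * (ln (q k) - ln (q kk))).
Proof.
rewrite tiltE ler_pdivrMr ?partition_gt0 //.
have partition_ge : p kk * expR (g * ln (q kk)) <= partition g.
  rewrite /partition (bigD1 kk) //= lerDl.
  by apply: sumr_ge0 => j _; rewrite mulr_ge0 ?expR_ge0 ?ltW.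
apply: le_trans (ler_wpM2l _ partition_ge); last by rewrite mulr_ge0 ?divr_ge0 ?expR_ge0 ?ltW.
rewrite mulrBr expRB [X in _ <= X](_ : _ = p k * expR (g * ln (q k))) //.
by field; rewrite !gt_eqF ?expR_gt0.
Qed.

Lemma tilt_concentrates kk s :
  (forall k, k != kk -> s * (ln (q k) - ln (q kk)) < 0) ->
  forall e, 0 < e -> exists G, forall g, G <= g -> 1 - tilt q p (s * g) kk <= e.
Proof.
move=> s_neg e e0; have eK : 0 < e / K%:R by rewrite divr_gt0 // ltr0n.
have term_small k : exists G : R, k != kk -> forall g, G <= g ->
    p k / p kk * expR (g * (s * (ln (q k) - ln (q kk)))) <= e / K%:R.
  have [->|k_kk] := eqVneq k kk; first by exists 0.
  have d_lt0 := s_neg k k_kk; set d := s * _ in d_lt0 *.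
  have C_gt0 : 0 < e / K%:R * (p kk / p k) by rewrite mulr_gt0 // divr_gt0.
  exists (ln (e / K%:R * (p kk / p k)) / d) => _ g G_le.
  rewrite mulrC -invf_div ler_pdivrMr ?divr_gt0 //.
  by rewrite -[X in _ <= X]lnK ?posrE // ler_expR -ler_ndivrMr.
have [G G_spec] := choice term_small.
exists (\sum_k `|G k|) => g G_le.
rewrite tilt_complement.
apply: le_trans (_ : \sum_(k < K | k != kk) (e / K%:R) <= _); last first.
  rewrite big_mkcond (le_trans (_ : _ <= \sum_(k < K) e / K%:R)) //.
    by apply: ler_sum => k _; case: ifP => // _; rewrite ltW.
  by rewrite sumr_const card_ord -[_ *+ K]mulr_natr divfK // pnatr_eq0 -lt0n.
apply: ler_sum => k k_kk; apply: le_trans (tilt_le_ratio _ _ kk) _.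
rewrite [s * g]mulrC -[g * s * _]mulrA; apply: (G_spec k k_kk g).
apply: le_trans G_le; apply: le_trans (ler_norm _) _.
by rewrite (bigD1 k) //= lerDl sumr_ge0.
Qed.

Section Words.
Variable m : nat.
Implicit Types y : {ffun 'I_m -> 'I_K}.

Definition tilt_prod th y : R := \prod_(i < m) tilt q p th (y i).
Definition total_surprisal y : R := \sum_(i < m) surprisal (y i).

Lemma tilt_prod_ge0 th y : 0 <= tilt_prod th y.
Proof. by apply: prodr_ge0 => i _; rewrite ltW // tilt_gt0. Qed.

Lemma sum_tilt_prod th : \sum_y tilt_prod th y = 1.
Proof.
rewrite /tilt_prod -(bigA_distr_bigA (fun _ k => tilt q p th k)) /=.
by under eq_bigr do rewrite sum_tilt; rewrite prodr_const expr1n.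
Qed.

Lemma negrewardE y : negreward q y = m%:R^-1 * total_surprisal y.
Proof.
rewrite /negreward ln_prod // -mulrN -sumrN.
by congr (_ * _); apply: eq_bigr => i _; rewrite surprisalE.
Qed.

Lemma probZE th B : probZ (tilt q p th) q m B =
  \sum_y (if negreward q y \in B then tilt_prod th y else 0).
Proof. by []. Qed.

Lemma tilt_prod_change th b y : tilt_prod th y = tilt_prod b y *
  expR (- ((th - b) * total_surprisal y + m%:R * (log_partition th - log_partition b))).
Proof.
have tilt_ratio k : tilt q p th k = tilt q p b k * expR (- llr th b (surprisal k)).
  have ratio_gt0 : 0 < tilt q p b k / tilt q p th k by rewrite divr_gt0 ?tilt_gt0.
  rewrite -ln_tilt_ratio -lnV ?posrE // lnK ?posrE ?invr_gt0 //.
  by rewrite invf_div mulrC mulfVK // gt_eqF // tilt_gt0.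
rewrite /tilt_prod (eq_bigr _ (fun i _ => tilt_ratio (y i))) big_split /= -expR_sum.
congr (_ * expR _); rewrite sumrN; congr (- _).
by rewrite -sumr_const_ord /total_surprisal mulr_sumr -big_split; apply: eq_bigr => i _;
  rewrite /llr -addrA.
Qed.

Lemma chernoff_bound th b s :
  \sum_y (if 0 <= (th - b) * (total_surprisal y - m%:R * s) then tilt_prod th y else 0)
  <= expR (- (m%:R * llr th b s)).
Proof.
apply: le_trans (_ : \sum_y tilt_prod b y * expR (- (m%:R * llr th b s)) <= _); last first.
  by rewrite -mulr_suml sum_tilt_prod mul1r.
apply: ler_sum => y _; case: ifP => [tail|_]; last first.
  by rewrite mulr_ge0 ?tilt_prod_ge0 ?expR_ge0.
rewrite (tilt_prod_change th b) ler_wpM2l ?tilt_prod_ge0 // ler_expR lerN2 /llr.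
by move: tail; rewrite mulrBr; lra.
Qed.

Lemma tilt_prod_ge_shift th b t e y :
  `|total_surprisal y - m%:R * t| < m%:R * e ->
  expR (- (m%:R * (llr th b t + `|th - b| * e))) * tilt_prod b y <= tilt_prod th y.
Proof.
move=> near_t; rewrite (tilt_prod_change th b) mulrC ler_wpM2l ?tilt_prod_ge0 //.
rewrite ler_expR lerN2 /llr.
have : (th - b) * (total_surprisal y - m%:R * t) <= `|th - b| * (m%:R * e).
  by apply: le_trans (ler_norm _) _; rewrite normrM ler_wpM2l // ltW.
lra.
Qed.

Lemma probZ_ge0 th B : 0 <= probZ (tilt q p th) q m B.
Proof. by apply: sumr_ge0 => y _; case: ifP => // _; apply: tilt_prod_ge0. Qed.

Lemma probZ_le1 th B : probZ (tilt q p th) q m B <= 1.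
Proof.
by rewrite probZE -(sum_tilt_prod th); apply: masked_sum_le_total => y; exact: tilt_prod_ge0.
Qed.

End Words.

Section Extremes.
Hypothesis q_inj : forall j k : 'I_K, j != k -> q j != q k.
Hypothesis K_gt1 : (1 < K)%N.
Variables kmax kmin : 'I_K.
Hypothesis q_le_max : forall k, q k <= q kmax.
Hypothesis q_ge_min : forall k, q kmin <= q k.

Local Notation T := (tilt q p).
Local Notation smin := (surprisal kmax).
Local Notation smax := (surprisal kmin).

Lemma kmin_neq_kmax : kmin != kmax.
Proof.
have /q_inj : Ordinal K_gt0 != Ordinal K_gt1 by [].
apply: contraNneq => eq_minmax.
have q_const k : q k = q kmax by apply/le_anti; rewrite q_le_max -eq_minmax q_ge_min.
by rewrite !q_const.
Qed.

Lemma smin_le k : smin <= surprisal k.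
Proof. by rewrite !surprisalE lerN2 ler_ln ?posrE. Qed.

Lemma le_smax k : surprisal k <= smax.
Proof. by rewrite !surprisalE lerN2 ler_ln ?posrE. Qed.

Lemma smin_lt k : k != kmax -> smin < surprisal k.
Proof.
by move=> k_max; rewrite !surprisalE ltrN2 ltr_ln ?posrE // lt_neqAle q_le_max andbT q_inj.
Qed.

Lemma lt_smax k : k != kmin -> surprisal k < smax.
Proof.
by move=> k_min; rewrite !surprisalE ltrN2 ltr_ln ?posrE // lt_neqAle q_ge_min andbT q_inj // eq_sym.
Qed.

Lemma smin_lt_smax : smin < smax.
Proof. exact/smin_lt/kmin_neq_kmax. Qed.

Lemma tilt_mean_subr g x :
  tilt_mean g - x = \sum_k T g k * (surprisal k - x).
Proof.
under [RHS]eq_bigr => k _ do rewrite mulrBr.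
by rewrite sumrB -mulr_suml sum_tilt mul1r.
Qed.

Lemma smin_lt_tilt_mean g : smin < tilt_mean g.
Proof.
rewrite -subr_gt0 tilt_mean_subr (bigD1 kmin) //= ltr_wpDr //.
  by apply: sumr_ge0 => k _; rewrite mulr_ge0 ?subr_ge0 ?smin_le // ltW // tilt_gt0.
by rewrite mulr_gt0 ?tilt_gt0 // subr_gt0 smin_lt // kmin_neq_kmax.
Qed.

Lemma tilt_mean_lt_smax g : tilt_mean g < smax.
Proof.
rewrite -subr_lt0 tilt_mean_subr (bigD1 kmax) //= ltr_wnDr //.
  by apply: sumr_le0 => k _; rewrite mulr_ge0_le0 ?subr_le0 ?le_smax // ltW // tilt_gt0.
by rewrite pmulr_rlt0 ?tilt_gt0 // subr_lt0 lt_smax // eq_sym kmin_neq_kmax.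
Qed.

(* Equal tilts would make [llr g b] vanish at the two distinct points [smin]
   and [smax]. *)
Lemma tilt_neq b g : b != g -> exists k, T b k != T g k.
Proof.
move=> bg; apply/not_existsP => T_neq.
have llr0 k : llr g b (surprisal k) = 0.
  have T_eq : T b k = T g k by apply/eqP/negPn/negP; exact: T_neq.
  by rewrite -ln_tilt_ratio T_eq divff ?ln1 // gt_eqF // tilt_gt0.
have := llr0 kmin; have := llr0 kmax; rewrite /llr => llr_max llr_min.
have /eqP : (g - b) * (smax - smin) = 0 by lra.
rewrite mulf_eq0 !subr_eq0 (eq_sym g) (negbTE bg) /=.
by rewrite gt_eqF // smin_lt_smax.
Qed.

Lemma KL_tilt_ge0 b g : 0 <= KL (T b) (T g).
Proof. by apply: KL_ge0 => [k|k|]; rewrite ?tilt_gt0 ?sum_tilt. Qed.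

Lemma KL_tilt_gt0 b g : b != g -> 0 < KL (T b) (T g).
Proof. by move/tilt_neq; apply: KL_gt0 => [k|k|]; rewrite ?tilt_gt0 ?sum_tilt. Qed.

(* Adding [KL (T b1) (T b2)] and [KL (T b2) (T b1)] leaves
   [(b2 - b1) * (tilt_mean b1 - tilt_mean b2)]. *)
Lemma tilt_mean_decreasing b1 b2 : b1 < b2 -> tilt_mean b2 < tilt_mean b1.
Proof.
move=> b12; have KL12 : 0 < KL (T b1) (T b2) by rewrite KL_tilt_gt0 ?lt_eqF.
have KL21 : 0 < KL (T b2) (T b1) by rewrite KL_tilt_gt0 ?gt_eqF.
rewrite !KL_tilt /llr in KL12 KL21.
have : 0 < (b2 - b1) * (tilt_mean b1 - tilt_mean b2) by lra.
by rewrite pmulr_rgt0 ?subr_gt0.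
Qed.

Lemma ltr_tilt_mean b1 b2 : (tilt_mean b2 < tilt_mean b1) = (b1 < b2).
Proof.
apply/idP/idP => [f_lt|/tilt_mean_decreasing //].
rewrite ltNge le_eqVlt; apply/negP => /orP[/eqP eq_b|/tilt_mean_decreasing].
  by move: f_lt; rewrite eq_b ltxx.
by move/(lt_trans f_lt); rewrite ltxx.
Qed.

Lemma tilt_kmax_concentrates e : 0 < e ->
  exists G, forall g, G <= g -> 1 - T g kmax <= e.
Proof.
move=> e0; have [|G G_spec] := tilt_concentrates (kk := kmax) (s := 1) _ e0.
  by move=> k k_max; rewrite mul1r subr_lt0 ltr_ln ?posrE // lt_neqAle q_le_max andbT q_inj.
by exists G => g /G_spec; rewrite mul1r.
Qed.

Lemma tilt_kmin_concentrates e : 0 < e ->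
  exists G, forall g, g <= G -> 1 - T g kmin <= e.
Proof.
move=> e0; have [|G G_spec] := tilt_concentrates (kk := kmin) (s := -1) _ e0.
  move=> k k_min; rewrite mulN1r oppr_lt0 subr_gt0 ltr_ln ?posrE //.
  by rewrite lt_neqAle q_ge_min andbT eq_sym q_inj // eq_sym.
by exists (- G) => g; rewrite lerNr => /G_spec; rewrite mulN1r opprK.
Qed.

Lemma tilt_mean_near_smin g : tilt_mean g - smin <= (smax - smin) * (1 - T g kmax).
Proof.
rewrite tilt_mean_subr (bigD1 kmax) //= subrr mulr0 add0r.
rewrite tilt_complement mulr_sumr.
apply: ler_sum => k _; rewrite mulrC; apply: ler_wpM2r; first exact/ltW/tilt_gt0.
by have := le_smax k; lra.
Qed.

Lemma tilt_mean_near_smax g : smax - tilt_mean g <= (smax - smin) * (1 - T g kmin).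
Proof.
rewrite -opprB tilt_mean_subr (bigD1 kmin) //= subrr mulr0 add0r -sumrN.
rewrite tilt_complement mulr_sumr.
apply: ler_sum => k _; rewrite -mulrN mulrC; apply: ler_wpM2r; first exact/ltW/tilt_gt0.
by have := smin_le k; lra.
Qed.

Lemma tilt_mean_range : range tilt_mean = `]smin, smax[%classic.
Proof.
apply/seteqP; split.
  by move=> _ [g _ <-] /=; rewrite in_itv /= smin_lt_tilt_mean tilt_mean_lt_smax.
move=> t /=; rewrite in_itv /= => /andP[t_gt t_lt].
have width_gt0 : 0 < smax - smin by rewrite subr_gt0 smin_lt_smax.
have e1 : 0 < (t - smin) / (2 * (smax - smin)) by rewrite divr_gt0 ?mulr_gt0 // subr_gt0.
have e2 : 0 < (smax - t) / (2 * (smax - smin)) by rewrite divr_gt0 ?mulr_gt0 // subr_gt0.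
have [G1 G1_spec] := tilt_kmax_concentrates e1.
have [G2 G2_spec] := tilt_kmin_concentrates e2.
have width_half x : (smax - smin) * (x / (2 * (smax - smin))) = x / 2.
  by field; rewrite gt_eqF.
have f1 : tilt_mean G1 < t.
  have := tilt_mean_near_smin G1; have := G1_spec G1 (lexx _).
  move=> /(ler_wpM2l (ltW width_gt0)); rewrite width_half; lra.
have f2 : t < tilt_mean G2.
  have := tilt_mean_near_smax G2; have := G2_spec G2 (lexx _).
  move=> /(ler_wpM2l (ltW width_gt0)); rewrite width_half; lra.
have G21 : G2 <= G1 by rewrite leNgt; apply/negP => /tilt_mean_decreasing; lra.
have f_cont : {within `[G2, G1], continuous tilt_mean}.
  by apply: continuous_subspaceT; apply: tilt_mean_continuous.
have t_between : Num.min (tilt_mean G2) (tilt_mean G1) <= t <=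
    Num.max (tilt_mean G2) (tilt_mean G1).
  by rewrite ge_min le_max (ltW f1) (ltW f2) orbT.
by have [x _ <-] := IVT G21 f_cont t_between; exists x.
Qed.

Section ExtremeWords.
Variable m : nat.
Implicit Types y : {ffun 'I_m -> 'I_K}.

Lemma total_surprisal_ge y : m%:R * smin <= total_surprisal y.
Proof. by rewrite -sumr_const_ord; apply: ler_sum => i _; exact: smin_le. Qed.

Lemma total_surprisal_le y : total_surprisal y <= m%:R * smax.
Proof. by rewrite -sumr_const_ord; apply: ler_sum => i _; exact: le_smax. Qed.

Lemma mean_surprisal_bounds y : (0 < m)%N ->
  smin <= m%:R^-1 * total_surprisal y <= smax.
Proof.
move=> m_gt0; rewrite ler_pdivlMl ?ltr0n // ler_pdivrMl ?ltr0n //.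
by rewrite total_surprisal_ge total_surprisal_le.
Qed.

Lemma tilt_prod_const th k : tilt_prod th ([ffun => k] : {ffun 'I_m -> 'I_K}) = T th k ^+ m.
Proof.
rewrite /tilt_prod (eq_bigr (fun=> T th k)) ?prodr_const ?card_ord // => i _.
by rewrite ffunE.
Qed.

Lemma total_surprisal_const k :
  total_surprisal ([ffun => k] : {ffun 'I_m -> 'I_K}) = m%:R * surprisal k.
Proof.
by rewrite /total_surprisal (eq_bigr (fun=> surprisal k)) ?sumr_const_ord // => i _; rewrite ffunE.
Qed.

Lemma expR_tilt_pow th k : expR (- (m%:R * ln (T th k)^-1)) = T th k ^+ m.
Proof.
by rewrite lnV ?posrE ?tilt_gt0 // mulrN opprK expRM_natl lnK // posrE tilt_gt0.
Qed.

Lemma word_at_smin y : total_surprisal y <= m%:R * smin -> y = [ffun => kmax].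
Proof.
move=> S_le; have gaps0 : \sum_(i < m) (surprisal (y i) - smin) = 0.
  apply/le_anti; rewrite sumr_ge0 => [|i _]; last by rewrite subr_ge0 smin_le.
  by rewrite sumrB sumr_const_ord subr_le0 S_le.
have gaps_ge0 (j : 'I_m) : true -> 0 <= surprisal (y j) - smin.
  by rewrite subr_ge0 smin_le.
apply/ffunP => i; rewrite ffunE; apply/eqP; apply: contraT => y_max.
by have /eqP := psumr_eq0P gaps_ge0 gaps0 (i := i) isT; rewrite subr_eq0 gt_eqF ?smin_lt.
Qed.

Lemma word_at_smax y : m%:R * smax <= total_surprisal y -> y = [ffun => kmin].
Proof.
move=> S_ge; have gaps0 : \sum_(i < m) (smax - surprisal (y i)) = 0.
  apply/le_anti; rewrite sumr_ge0 => [|i _]; last by rewrite subr_ge0 le_smax.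
  by rewrite sumrB sumr_const_ord subr_le0 S_ge.
have gaps_ge0 (j : 'I_m) : true -> 0 <= smax - surprisal (y j).
  by rewrite subr_ge0 le_smax.
apply/ffunP => i; rewrite ffunE; apply/eqP; apply: contraT => y_min.
by have /eqP := psumr_eq0P gaps_ge0 gaps0 (i := i) isT; rewrite subr_eq0 gt_eqF ?lt_smax.
Qed.

Lemma probZ_eq0 th B : (0 < m)%N -> (forall t, B t -> ~ (smin <= t <= smax)) ->
  probZ (T th) q m B = 0.
Proof.
move=> m_gt0 B_off; rewrite probZE; apply: big1 => y _; case: ifP => // /set_mem.
by rewrite negrewardE => /B_off; rewrite mean_surprisal_bounds.
Qed.

End ExtremeWords.

(* Law of large numbers under [T beta], with the two tails controlled by
   [chernoff_bound] against the tilts whose means are [t - eps] and [t + eps]. *)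
Lemma tilt_prod_concentrates beta eps : 0 < eps ->
  smin < tilt_mean beta - eps -> tilt_mean beta + eps < smax ->
  exists N, forall n, (N <= n)%N ->
  2^-1 <= \sum_(y : {ffun 'I_n.+1 -> 'I_K})
    (if `|total_surprisal y - n.+1%:R * tilt_mean beta| < n.+1%:R * eps
     then tilt_prod beta y else 0).
Proof.
move=> eps_gt0 lo_in hi_in; set t := tilt_mean beta in lo_in hi_in *.
have [g1 _ f_g1] : range tilt_mean (t - eps).
  by rewrite tilt_mean_range /= in_itv /= lo_in /=; lra.
have [g2 _ f_g2] : range tilt_mean (t + eps).
  by rewrite tilt_mean_range /= in_itv /= hi_in andbT; lra.
have beta_lt_g1 : beta < g1 by rewrite -ltr_tilt_mean f_g1 -/t; lra.
have g2_lt_beta : g2 < beta by rewrite -ltr_tilt_mean f_g2 -/t; lra.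
have KL1 : 0 < KL (T g1) (T beta) by rewrite KL_tilt_gt0 // gt_eqF.
have KL2 : 0 < KL (T g2) (T beta) by rewrite KL_tilt_gt0 // lt_eqF.
have quarter_gt0 : 0 < 4^-1 :> R by [].
have [N1 N1_spec] := expR_mulN_le KL1 quarter_gt0.
have [N2 N2_spec] := expR_mulN_le KL2 quarter_gt0.
exists (maxn N1 N2) => n; rewrite geq_max => /andP[/N1_spec tail1 /N2_spec tail2].
set near := fun y : {ffun 'I_n.+1 -> 'I_K} =>
  `|total_surprisal y - n.+1%:R * t| < n.+1%:R * eps.
set lower := fun y : {ffun 'I_n.+1 -> 'I_K} =>
  0 <= (beta - g1) * (total_surprisal y - n.+1%:R * (t - eps)).
set upper := fun y : {ffun 'I_n.+1 -> 'I_K} =>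
  0 <= (beta - g2) * (total_surprisal y - n.+1%:R * (t + eps)).
have cover y : predT y -> near y || (lower y || upper y).
  move=> _; rewrite /near /lower /upper; case: ltP => //= far.
  have [S_ge|S_lt] := lerP 0 (total_surprisal y - n.+1%:R * t).
    rewrite ger0_norm // in far; apply/orP; right.
    apply: mulr_ge0; first by rewrite subr_ge0 ltW.
    by rewrite subr_ge0 mulrDr -lerBrDl.
  rewrite ltr0_norm // in far; apply/orP; left.
  apply: mulr_le0; first by rewrite subr_le0 ltW.
  by rewrite subr_le0 mulrBr lerBrDr addrC -lerBrDr -opprB.
have total := masked_sum_le_split (tilt_prod_ge0 beta) cover.
rewrite (eq_bigr (tilt_prod beta)) // sum_tilt_prod in total.
have tails := masked_sum_le_split (tilt_prod_ge0 beta) (fun y (h : lower y || upper y) => h).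
have low : \sum_y (if lower y then tilt_prod beta y else 0)
    <= expR (- (n.+1%:R * KL (T g1) (T beta))).
  by rewrite KL_tilt f_g1; exact: chernoff_bound.
have up : \sum_y (if upper y then tilt_prod beta y else 0)
    <= expR (- (n.+1%:R * KL (T g2) (T beta))).
  by rewrite KL_tilt f_g2; exact: chernoff_bound.
have tails_le : \sum_y (if lower y || upper y then tilt_prod beta y else 0) <= 2^-1.
  apply: le_trans tails _; rewrite [2^-1 in X in _ <= X](_ : _ = 4^-1 + 4^-1 :> R).
    exact: lerD (le_trans low tail1) (le_trans up tail2).
  by field.
have := le_trans total (lerD (lexx _) tails_le).
by rewrite -lerBlDr [1 - _](_ : _ = 2^-1 :> R) //; field.
Qed.

Section RateFunction.
Variable alpha : R.
Variable J : R -> \bar R.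
Hypothesis J_inside : forall t beta, smin < t < smax -> tilt_mean beta = t ->
  J t = (KL (T beta) (T alpha))%:E.
Hypothesis J_smin : J smin = (ln (T alpha kmax)^-1)%:E.
Hypothesis J_smax : J smax = (ln (T alpha kmin)^-1)%:E.
Hypothesis J_outside : forall t, t < smin \/ smax < t -> J t = +oo%E.

Lemma J_llr t : smin < t < smax ->
  exists beta, tilt_mean beta = t /\ J t = (llr alpha beta t)%:E.
Proof.
move=> t_in; have : range tilt_mean t by rewrite tilt_mean_range /= in_itv.
by move=> [beta _ f_beta]; exists beta; rewrite (J_inside t_in f_beta) KL_tilt f_beta.
Qed.

Lemma J_tilt_mean : J (tilt_mean alpha) = 0%:E.
Proof.
by rewrite (J_inside _ (erefl _)) ?smin_lt_tilt_mean ?tilt_mean_lt_smax // KL_tilt llr_id.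
Qed.

(* [J] is the Legendre transform [t |-> sup_g llr alpha g t]. *)
Lemma llr_le_J g t : ((llr alpha g t)%:E <= J t)%E.
Proof.
have [t_lt|] := ltP t smin; first by rewrite J_outside ?leey //; left.
rewrite le_eqVlt => /orP[/eqP <-|t_gt]; first by rewrite J_smin lee_fin llr_surprisal_le.
have [t_lt|] := ltP t smax.
  have [beta [f_beta ->]] := J_llr (ltac:(by rewrite t_gt t_lt) : smin < t < smax).
  by rewrite lee_fin -subr_ge0 llr_sub -f_beta -KL_tilt KL_tilt_ge0.
rewrite le_eqVlt => /orP[/eqP <-|smax_lt]; first by rewrite J_smax lee_fin llr_surprisal_le.
by rewrite J_outside ?leey //; right.
Qed.

Lemma J_ge0 t : (0 <= J t)%E.
Proof. by apply: le_trans (llr_le_J alpha t); rewrite llr_id. Qed.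

Lemma J_fin t : smin <= t <= smax -> exists v, J t = v%:E.
Proof.
move=> /andP[t_ge t_le].
have [->|t_smin] := eqVneq t smin; first by rewrite J_smin; eexists.
have [->|t_smax] := eqVneq t smax; first by rewrite J_smax; eexists.
have t_in : smin < t < smax by rewrite !lt_neqAle t_ge t_le eq_sym t_smin t_smax.
by have [beta [_ ->]] := J_llr t_in; eexists.
Qed.

(* At an endpoint, [llr alpha g] approaches [J] as the tilt concentrates on the
   corresponding letter. *)
Lemma lt_llr_endpoint k r : r < ln (T alpha k)^-1 ->
  (forall e, 0 < e -> exists g, 1 - T g k <= e) ->
  exists g, r < llr alpha g (surprisal k).
Proof.
move=> r_lt concentrates; set eta := ln (T alpha k)^-1 - r.
have eta_gt0 : 0 < eta by rewrite subr_gt0.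
have expR_lt1 : expR (- eta) < 1 by rewrite expR_lt1 oppr_lt0.
have [g g_spec] := concentrates ((1 - expR (- eta)) / 2)
  (ltac:(by rewrite divr_gt0 // subr_gt0)).
exists g; rewrite -ln_tilt_ratio ln_div ?posrE ?tilt_gt0 //.
have : - eta < ln (T g k).
  by rewrite -[X in X < _](expRK (- eta)) ltr_ln ?posrE ?expR_gt0 ?tilt_gt0 //; lra.
by rewrite /eta lnV ?posrE ?tilt_gt0 //; lra.
Qed.

Lemma lt_J_llr x r : smin <= x <= smax -> (r%:E < J x)%E ->
  exists g, r < llr alpha g x.
Proof.
move=> /andP[x_ge x_le] r_lt.
have [x_smin|x_smin] := eqVneq x smin.
  rewrite x_smin J_smin lte_fin in r_lt *; apply: lt_llr_endpoint => // e e0.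
  by have [G G_spec] := tilt_kmax_concentrates e0; exists G; apply: G_spec.
have [x_smax|x_smax] := eqVneq x smax.
  rewrite x_smax J_smax lte_fin in r_lt *; apply: lt_llr_endpoint => // e e0.
  by have [G G_spec] := tilt_kmin_concentrates e0; exists G; apply: G_spec.
have x_in : smin < x < smax by rewrite !lt_neqAle x_ge x_le eq_sym x_smin x_smax.
by have [beta [_ J_x]] := J_llr x_in; exists beta; rewrite J_x lte_fin in r_lt.
Qed.

(* Each [llr alpha g] is affine with slope [alpha - g], so a strict minorant
   at [x] persists on a ball around [x]. *)
Lemma J_lsc : lower_semicontinuous J.
Proof.
move=> x r r_lt.
have [x_lt|x_ge] := ltP x smin.
  exists (ball x (smin - x)); first by apply: nbhsx_ballx; rewrite subr_gt0.
  move=> y; rewrite /ball /= => xy; rewrite J_outside ?ltey //; left.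
  by have := ler_norm (y - x); rewrite distrC in xy; lra.
have [x_gt|x_le] := ltP smax x.
  exists (ball x (x - smax)); first by apply: nbhsx_ballx; rewrite subr_gt0.
  move=> y; rewrite /ball /= => xy; rewrite J_outside ?ltey //; right.
  by have := ler_norm (x - y); lra.
have [g r_lt_llr] := lt_J_llr (ltac:(by rewrite x_ge x_le) : smin <= x <= smax) r_lt.
set d := (llr alpha g x - r) / (`|alpha - g| + 1).
have d_gt0 : 0 < d by rewrite divr_gt0 ?subr_gt0 // ltr_pwDr.
exists (ball x d); first exact: nbhsx_ballx.
move=> y; rewrite /ball /= => xy; apply: lt_le_trans (llr_le_J g y); rewrite lte_fin.
have llr_slope : llr alpha g y - llr alpha g x = (alpha - g) * (y - x).
  by rewrite /llr; ring.
have slope_le : `|(alpha - g) * (y - x)| <= `|alpha - g| * d.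
  by rewrite normrM ler_wpM2l // distrC ltW.
have slope_lt : `|alpha - g| * d < llr alpha g x - r.
  rewrite /d mulrA ltr_pdivrMr ?ltr_pwDr //.
  have := normr_ge0 (alpha - g); have : 0 < llr alpha g x - r by rewrite subr_gt0.
  nra.
by have := ler_norm (- ((alpha - g) * (y - x))); rewrite normrN; lra.
Qed.

Lemma J_compact (v : R) : compact [set t | (J t <= v%:E)%E].
Proof.
apply: (@subclosed_compact _ _ `[smin, smax]); last 2 first.
- exact: segment_compact.
- move=> t /= J_le; rewrite in_itv /=.
  have [t_lt|t_ge] := ltP t smin; first by rewrite J_outside ?leey in J_le; [|left].
  have [t_gt|t_le] := ltP smax t; first by rewrite J_outside ?leey in J_le; [|right].
  by apply/andP; split.
have -> : [set t | (J t <= v%:E)%E] = ~` [set t | (v%:E < J t)%E].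
  by apply/seteqP; split => t /=; rewrite leNgt => /negP.
by apply: open_closedC; move: J_lsc; rewrite lower_semicontinuousP.
Qed.

Lemma lower_tail_bound m s v : smin <= s < tilt_mean alpha -> J s = v%:E ->
  \sum_(y : {ffun 'I_m -> 'I_K})
     (if total_surprisal y <= m%:R * s then tilt_prod alpha y else 0)
  <= expR (- (m%:R * v)).
Proof.
move=> /andP[s_ge s_lt] J_s.
have [s_smin|s_smin] := eqVneq s smin.
  move: J_s; rewrite s_smin J_smin => -[<-].
  rewrite expR_tilt_pow -(tilt_prod_const m alpha kmax).
  by apply: masked_sum_le_single => [y|y]; [exact: tilt_prod_ge0 | exact: word_at_smin].
have s_in : smin < s < smax.
  by rewrite lt_neqAle eq_sym s_smin s_ge /= (lt_trans s_lt) // tilt_mean_lt_smax.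
have [beta [f_beta J_beta]] := J_llr s_in; move: J_s; rewrite J_beta => -[<-].
have alpha_lt : alpha < beta by rewrite -ltr_tilt_mean f_beta.
apply: le_trans (chernoff_bound m alpha beta s).
apply: masked_sum_le => [y|y S_le]; first exact: tilt_prod_ge0.
by rewrite mulr_le0 // subr_le0 // ltW.
Qed.

Lemma upper_tail_bound m s v : tilt_mean alpha < s <= smax -> J s = v%:E ->
  \sum_(y : {ffun 'I_m -> 'I_K})
     (if m%:R * s <= total_surprisal y then tilt_prod alpha y else 0)
  <= expR (- (m%:R * v)).
Proof.
move=> /andP[s_gt s_le] J_s.
have [s_smax|s_smax] := eqVneq s smax.
  move: J_s; rewrite s_smax J_smax => -[<-].
  rewrite expR_tilt_pow -(tilt_prod_const m alpha kmin).
  by apply: masked_sum_le_single => [y|y]; [exact: tilt_prod_ge0 | exact: word_at_smax].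
have s_in : smin < s < smax.
  by rewrite [s < smax]lt_neqAle s_smax s_le (lt_trans _ s_gt) // smin_lt_tilt_mean.
have [beta [f_beta J_beta]] := J_llr s_in; move: J_s; rewrite J_beta => -[<-].
have beta_lt : beta < alpha by rewrite -ltr_tilt_mean f_beta.
apply: le_trans (chernoff_bound m alpha beta s).
apply: masked_sum_le => [y|y S_ge]; first exact: tilt_prod_ge0.
by rewrite mulr_ge0 // subr_ge0 // ltW.
Qed.

Section ClosedTails.
Variables (F : set R) (I : R) (m : nat).
Hypothesis F_closed : closed F.
Hypothesis F_mean : ~ F (tilt_mean alpha).
Hypothesis m_gt0 : (0 < m)%N.
Hypothesis J_ge_I : forall s v, F s -> J s = v%:E -> I <= v.

Local Notation Z y := (m%:R^-1 * total_surprisal y).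

(* The part of [F] below the mean is controlled by its largest point, which
   lies in [F] because [F] is closed; symmetrically above the mean. *)
Lemma closed_lower_tail_bound :
  \sum_(y : {ffun 'I_m -> 'I_K})
     (if (Z y \in F) && (Z y < tilt_mean alpha) then tilt_prod alpha y else 0)
  <= expR (- (m%:R * I)).
Proof.
set A := F `&` ([set x | smin <= x] `&` [set x | x <= tilt_mean alpha]).
have A_closed : closed A by apply: closedI => //; apply: closedI; [exact: closed_ge|exact: closed_le].
have A_ub : has_ubound A by exists (tilt_mean alpha) => x [_ [_ /= x_le]].
have A_Z (y : {ffun 'I_m -> 'I_K}) : Z y \in F -> Z y < tilt_mean alpha -> A (Z y).
  move=> /set_mem F_Z Z_lt; split => //; split => /=; last exact: ltW.
  by case/andP: (mean_surprisal_bounds y m_gt0).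
have [A0|A0] := pselect (A !=set0); last first.
  rewrite big1 ?expR_ge0 // => y _; case: ifP => // /andP[F_Z Z_lt].
  by case: A0; exists (Z y); apply: A_Z.
have [F_s [/= s_ge s_le]] := closed_sup_mem A_closed A0 A_ub.
have s_lt : sup A < tilt_mean alpha.
  by rewrite lt_neqAle s_le andbT; apply: contraPneq F_mean => <-.
have [v J_v] : exists v, J (sup A) = v%:E.
  by apply: J_fin; rewrite s_ge (le_trans s_le) // ltW // tilt_mean_lt_smax.
apply: le_trans (_ : _ <= expR (- (m%:R * v))) _; last first.
  by rewrite ler_expR lerN2 ler_pM2l ?ltr0n // (J_ge_I F_s J_v).
have s_range : smin <= sup A < tilt_mean alpha by rewrite s_ge s_lt.
apply: le_trans (lower_tail_bound m s_range J_v).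
apply: masked_sum_le => [y|y /andP[F_Z Z_lt]]; first exact: tilt_prod_ge0.
by rewrite -ler_pdivrMl ?ltr0n //; apply: sup_upper_bound => //; apply: A_Z.
Qed.

Lemma closed_upper_tail_bound :
  \sum_(y : {ffun 'I_m -> 'I_K})
     (if (Z y \in F) && (tilt_mean alpha < Z y) then tilt_prod alpha y else 0)
  <= expR (- (m%:R * I)).
Proof.
set A := (fun u : R => - u) @^-1` (F `&` ([set x | tilt_mean alpha <= x] `&` [set x | x <= smax])).
have A_closed : closed A.
  apply: preimage_closed => [x _|]; first exact: oppr_continuous.
  by apply: closedI => //; apply: closedI; [exact: closed_ge|exact: closed_le].
have A_ub : has_ubound A by exists (- tilt_mean alpha) => x [_ [/= x_le _]]; rewrite lerNr.
have A_Z (y : {ffun 'I_m -> 'I_K}) : Z y \in F -> tilt_mean alpha < Z y -> A (- Z y).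
  move=> /set_mem F_Z Z_gt; rewrite /A /= opprK; split => //; split => /=.
    exact: ltW.
  by case/andP: (mean_surprisal_bounds y m_gt0).
have [A0|A0] := pselect (A !=set0); last first.
  rewrite big1 ?expR_ge0 // => y _; case: ifP => // /andP[F_Z Z_gt].
  by case: A0; exists (- Z y); apply: A_Z.
have [F_s [/= s_ge s_le]] := closed_sup_mem A_closed A0 A_ub.
have s_gt : tilt_mean alpha < - sup A.
  by rewrite lt_neqAle s_ge andbT; apply: contraPneq F_mean => ->.
have [v J_v] : exists v, J (- sup A) = v%:E.
  by apply: J_fin; rewrite s_le andbT (le_trans _ s_ge) // ltW // smin_lt_tilt_mean.
apply: le_trans (_ : _ <= expR (- (m%:R * v))) _; last first.
  by rewrite ler_expR lerN2 ler_pM2l ?ltr0n // (J_ge_I F_s J_v).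
have s_range : tilt_mean alpha < - sup A <= smax by rewrite s_gt s_le.
apply: le_trans (upper_tail_bound m s_range J_v).
apply: masked_sum_le => [y|y /andP[F_Z Z_gt]]; first exact: tilt_prod_ge0.
rewrite -ler_pdivlMl ?ltr0n // lerNl.
by apply: sup_upper_bound => //; apply: A_Z.
Qed.

Lemma probZ_le_tails B : B `<=` F -> probZ (T alpha) q m B <= 2 * expR (- (m%:R * I)).
Proof.
move=> B_F; rewrite probZE.
apply: le_trans (masked_sum_le_split _
  (Q1 := fun y => (Z y \in F) && (Z y < tilt_mean alpha))
  (Q2 := fun y => (Z y \in F) && (tilt_mean alpha < Z y)) _) _.
- exact: tilt_prod_ge0.
- move=> y; rewrite inE negrewardE => /B_F F_Z; rewrite (mem_set F_Z) /=.
  by case: ltgtP => // Z_eq; case: F_mean; rewrite -Z_eq.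
- by have := closed_lower_tail_bound; have := closed_upper_tail_bound; lra.
Qed.

End ClosedTails.

Lemma LDP_upper B : (limn_esup (rate_seq (fun n => probZ (T alpha) q n.+1 B))
   <= - ereal_inf (J @` closure B))%E.
Proof.
set F := closure B; have B_F : B `<=` F := @subset_closure _ B.
have [[s0 [F_s0 s0_in]]|F_off] := pselect (exists s, F s /\ smin <= s <= smax); last first.
  apply: le_trans (limn_esup_le_esups _ 0) (le_trans _ (leNye _)).
  apply: ge_ereal_sup => _ [n _ <-]; rewrite /rate_seq probZ_eq0 //.
    by rewrite /elog eqxx gt0_muleNy // lte_fin invr_gt0 ltr0n.
  by move=> t /B_F F_t t_in; apply: F_off; exists t.
set I := ereal_inf (J @` F).
have I_ge0 : (0 <= I)%E by apply: le_ereal_inf_tmp => _ [s _ <-]; apply: J_ge0.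
have [v0 J_v0] := J_fin s0_in.
have I_fin : I \is a fin_num.
  rewrite ge0_fin_numE //; apply: le_lt_trans (ltry v0).
  by rewrite -J_v0; apply: ereal_inf_lbound; exists s0.
rewrite -(fineK I_fin); set I' := fine I.
have J_ge_I s v : F s -> J s = v%:E -> I' <= v.
  by move=> F_s J_s; rewrite -lee_fin fineK // -J_s; apply: ereal_inf_lbound; exists s.
apply: (@limn_esup_rate_le _ _ 2) => // n; rewrite probZ_ge0 /=.
have [F_mean|F_mean] := pselect (F (tilt_mean alpha)).
  have -> : I' = 0.
    by apply/le_anti; rewrite (J_ge_I _ _ F_mean J_tilt_mean) /= -lee_fin fineK.
  by rewrite mulr0 oppr0 expR0 mulr1; apply: le_trans (probZ_le1 _ _ _) _; lra.
by apply: (probZ_le_tails _ F_mean _ J_ge_I B_F) => //; exact: closed_closure.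
Qed.

Lemma LDP_lower_interior B t beta : smin < t < smax -> tilt_mean beta = t ->
  interior B t ->
  ((- llr alpha beta t)%:E <= limn_einf (rate_seq (fun n => probZ (T alpha) q n.+1 B)))%E.
Proof.
move=> /andP[t_gt t_lt] f_beta /nbhs_ballP[r /= r_gt0 ball_B].
apply/lee_subgt0Pr => e e_gt0; rewrite -EFinB.
set d := `|alpha - beta|.
set eps := Num.min (Num.min r ((t - smin) / 2)) (Num.min ((smax - t) / 2) (e / (d + 1))).
have d_ge0 : 0 <= d by apply: normr_ge0.
have eps_gt0 : 0 < eps.
  by rewrite !lt_min r_gt0 !divr_gt0 ?subr_gt0 // ltr_pwDr.
have [eps_r eps_lo eps_hi eps_e] : [/\ eps <= r, eps <= (t - smin) / 2,
    eps <= (smax - t) / 2 & eps <= e / (d + 1)].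
  by rewrite /eps !ge_min !lexx !orbT.
have slack : d * eps <= e.
  by move: eps_e; rewrite ler_pdivlMr ?ltr_pwDr // => ?; nra.
have lo_in : smin < tilt_mean beta - eps by rewrite f_beta; lra.
have hi_in : tilt_mean beta + eps < smax by rewrite f_beta; lra.
have [N N_spec] := tilt_prod_concentrates eps_gt0 lo_in hi_in.
apply: le_trans (_ : (- (llr alpha beta t + d * eps))%:E <= _)%E.
  by rewrite lee_fin; lra.
apply: (@limn_einf_rate_ge _ _ 2^-1 _ N) => // n n_ge.
have near_B (y : {ffun 'I_n.+1 -> 'I_K}) :
    `|total_surprisal y - n.+1%:R * t| < n.+1%:R * eps -> negreward q y \in B.
  move=> near; apply/mem_set; rewrite negrewardE; apply: ball_B; rewrite /ball /=.
  rewrite (_ : t - _ = - ((total_surprisal y - n.+1%:R * t) / n.+1%:R)); last first.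
    by field; rewrite gt_eqF ?ltr0n.
  rewrite normrN normrM normfV normr_nat ltr_pdivrMr ?ltr0n //.
  by apply: lt_le_trans near _; rewrite mulrC ler_wpM2r.
rewrite probZE mulrC; apply: le_trans (_ : expR (- (n.+1%:R * (llr alpha beta t + d * eps))) *
    \sum_y (if `|total_surprisal y - n.+1%:R * t| < n.+1%:R * eps
            then tilt_prod beta y else 0) <= _).
  by rewrite ler_wpM2l ?expR_ge0 // -f_beta; exact: N_spec.
rewrite mulr_sumr; apply: ler_sum => y _; case: ifP => near; last first.
  by rewrite mulr0; case: ifP => // _; exact: tilt_prod_ge0.
by rewrite (near_B y near); exact: tilt_prod_ge_shift.
Qed.

(* Near an extreme surprisal, the single constant word already carries
   enough mass. *)
Lemma LDP_lower_endpoint B k : interior B (surprisal k) ->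
  ((- ln (T alpha k)^-1)%:E <= limn_einf (rate_seq (fun n => probZ (T alpha) q n.+1 B)))%E.
Proof.
move=> /interior_subset B_k; apply: (@limn_einf_rate_ge _ _ 1 _ 0) => // n _.
rewrite mul1r expR_tilt_pow -(tilt_prod_const n.+1 alpha k) probZE.
apply: masked_sum_ge_term => [y|]; first exact: tilt_prod_ge0.
by apply/mem_set; rewrite negrewardE total_surprisal_const mulrA mulVf ?mul1r.
Qed.

Lemma LDP_lower B : (- ereal_inf (J @` interior B)
   <= limn_einf (rate_seq (fun n => probZ (T alpha) q n.+1 B)))%E.
Proof.
rewrite ereal_infEN oppeK; apply: ge_ereal_sup => _ [_ [t B_t <-] <-].
have [t_lt|t_ge] := ltP t smin; first by rewrite J_outside /= ?leNye //; left.
have [t_gt|t_le] := ltP smax t; first by rewrite J_outside /= ?leNye //; right.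
have [t_smin|t_smin] := eqVneq t smin.
  by rewrite t_smin J_smin -EFinN in B_t *; exact: LDP_lower_endpoint.
have [t_smax|t_smax] := eqVneq t smax.
  by rewrite t_smax J_smax -EFinN in B_t *; exact: LDP_lower_endpoint.
have t_in : smin < t < smax by rewrite !lt_neqAle t_ge t_le eq_sym t_smin t_smax.
have [beta [f_beta ->]] := J_llr t_in.
by rewrite -EFinN; apply: LDP_lower_interior.
Qed.

Lemma LDP_J : LDP (probZ (T alpha) q) J.
Proof.
split; [exact: J_ge0 | exact: J_lsc | exact: J_compact |].
by move=> B _; split; [exact: LDP_lower | exact: LDP_upper].
Qed.

End RateFunction.
End Extremes.
End TiltedFamily.

Theorem mainTheorem4 (R : realType) (K : nat) (zeta : R) (p q : 'I_K -> R)
    (kmax kmin : 'I_K) (delta alpha : R) :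
  (2 <= K)%N -> 0 < zeta < K%:R^-1 ->
  inS zeta p -> inS zeta q ->
  (forall k, q k <= q kmax) -> (forall k, q kmin <= q k) ->
  0 <= delta < ln (p kmax)^-1 ->
  0 <= alpha -> KL (tilt q p alpha) p = delta ->
  let phi := tilt q p alpha in
  let f := fun beta : R => crossH (tilt q p beta) q in
  let a := ln (q kmax)^-1 in
  let b := ln (q kmin)^-1 in
  [/\ continuous f,
      (forall b1 b2 : R, b1 < b2 -> f b2 < f b1),
      range f = `]a, b[%classic &
      forall J : R -> \bar R,
        (forall t beta : R, a < t < b -> f beta = t ->
           J t = (KL (tilt q p beta) phi)%:E) ->
        J a = (ln (phi kmax)^-1)%:E ->
        J b = (ln (phi kmin)^-1)%:E ->
        (forall t : R, t < a \/ b < t -> J t = +oo%E) ->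
        LDP (probZ phi q) J].
Proof.
move=> K_gt1 /andP[zeta_gt0 _] [_ p_gt _] [_ q_gt q_inj] q_le_max q_ge_min _ _ _.
have p_gt0 k : 0 < p k by exact: lt_trans (p_gt k).
have q_gt0 k : 0 < q k by exact: lt_trans (q_gt k).
have K_gt0 : (0 < K)%N by exact: ltnW.
split.
- exact: (tilt_mean_continuous p_gt0 q_gt0 K_gt0).
- by move=> b1 b2; apply: tilt_mean_decreasing.
- exact: (tilt_mean_range p_gt0 q_gt0 K_gt0 q_inj K_gt1 q_le_max q_ge_min).
- by move=> J J_inside J_smin J_smax J_outside; apply: LDP_J.
Qed.
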